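(* There exist a parametrized datatype $A$ with two parameters $\alpha,\beta$ and two contexts $\Gamma_1,\Gamma_2$ over $\alpha,\beta$ such that $\emptyset\vDash A: t(\Gamma_1)$ and $\emptyset\vDash A:t(\Gamma_2)$, but $\emptyset\nvDash A:t(\min(\Gamma_1,\Gamma_2))$, where $\min$ is taken pointwise.
   Context: Type expressions: $\tau,\kappa ::= \alpha \mid \mathsf{float}\mid\mathsf{int}\mid\mathsf{bool}\mid t(\tau_1,\dots,\tau_n)\mid \tau\to\kappa\mid \tau_1\times\dots\times\tau_n\mid \forall\alpha.\tau\mid\exists\alpha.\tau\mid (\tau \text{ with } \kappa_1=\kappa_2)$ (equality guard). Datatypes include boxed/unboxed variants and records and type synonyms $\tau$. Modes $\mathsf{Ind}<\mathsf{Sep}<\mathsf{Deepsep}$; a context $\Gamma$ assigns modes to type variables. Ground values: $v::=\mathsf{true}\mid\mathsf{false}\mid \mathrm{int}(n)\mid\mathrm{float}(x)\ (x\in\mathbb R)\mid(v_1,\dots,v_n)\mid\mathsf{function}\mid\{l_1:v_1;\dots\}\mid C\,v$. Ground types are closed type expressions. With the empty block of type-constructor definitions ($\sigma=\emptyset$), inhabitation $v\vDash\tau$ is the least relation such that: $\mathsf{true},\mathsf{false}\vDash\mathsf{bool}$; $\mathrm{int}(n)\vDash\mathsf{int}$; $\mathrm{float}(x)\vDash\mathsf{float}$; $\mathsf{function}\vDash\tau_1\to\tau_2$; $(v_1,\dots,v_n)\vDash\tau_1\times\dots\times\tau_n$ if each $v_i\vDash\tau_i$; $v\vDash\exists\alpha.\kappa$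 if $v\vDash\kappa[\tau/\alpha]$ for some ground $\tau$; $v\vDash\forall\alpha.\kappa$ if for all ground $\tau$; $v\vDash(\kappa\text{ with }\tau_1=\tau_2)$ if $\tau_1,\tau_2$ are syntactically equal and $v\vDash\kappa$; nothing inhabits $t(\dots)$. A value inhabits a type-synonym datatype $\tau$ iff it inhabits $\tau$ (and boxed variants/records are inhabited by the corresponding tagged values, unboxed ones by the values of their argument type). A set $X$ of values is separable iff all its elements are of the form $\mathrm{float}(x)$ or none are. A ground type $\tau$ has semantic mode $\mathsf{Ind}$ always, mode $\mathsf{Sep}$ iff its set of inhabitants is separable, and mode $\mathsf{Deepsep}$ iff every syntactic sub-component of $\tau$ has mode $\mathsf{Sep}$. A ground valuation $\gamma$ (map from type variables to ground types) satisfies $\Gamma$ iff $\gamma(\alpha)$ has semantic mode $m$ for each $(\alpha:m)\in\Gamma$. For a datatype $A$ with parameters $\vec\alpha$, $\emptyset\vDash A:t(\vec{\alpha:m})$ means: for every ground valuation $\gamma$ satisfying $\vec{\alpha:m}$, the set of values inhabiting the ground datatype $\gamma(A)$ is separable. *)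

(* Semantic separability of (parametrized) datatypes, with the
   empty block of type-constructor definitions (sigma = empty). *)
From Stdlib Require Import Reals ZArith List Arith.
Import ListNotations.

Inductive ty : Type :=
| TVar : nat -> ty
| TFloat : ty
| TInt : ty
| TBool : ty
| TCon : nat -> list ty -> ty
| TArrow : ty -> ty -> ty
| TProd : list ty -> ty
| TAll : nat -> ty -> ty
| TEx : nat -> ty -> ty
| TWith : ty -> ty -> ty -> ty.          (* (kappa with kappa1 = kappa2) *)

Fixpoint occurs_free (a : nat) (t : ty) : bool :=
  match t with
  | TVar b => Nat.eqb a b
  | TFloat | TInt | TBool => false
  | TCon _ ts => existsb (occurs_free a) ts
  | TArrow t1 t2 => occurs_free a t1 || occurs_free a t2
  | TProd ts => existsb (occurs_free a) ts
  | TAll b t1 | TEx b t1 => if Nat.eqb a b then false else occurs_free a t1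
  | TWith k k1 k2 => occurs_free a k || occurs_free a k1 || occurs_free a k2
  end.

Definition ground (t : ty) : Prop := forall a, occurs_free a t = false.

(* simultaneous substitution; only used with ground images, so no capture *)
Fixpoint msubst (g : nat -> ty) (t : ty) : ty :=
  match t with
  | TVar b => g b
  | TFloat => TFloat
  | TInt => TInt
  | TBool => TBool
  | TCon c ts => TCon c (map (msubst g) ts)
  | TArrow t1 t2 => TArrow (msubst g t1) (msubst g t2)
  | TProd ts => TProd (map (msubst g) ts)
  | TAll b t1 => TAll b (msubst (fun c => if Nat.eqb c b then TVar c else g c) t1)
  | TEx b t1 => TEx b (msubst (fun c => if Nat.eqb c b then TVar c else g c) t1)
  | TWith k k1 k2 => TWith (msubst g k) (msubst g k1) (msubst g k2)
  end.

Definition subst1 (a : nat) (u : ty) (t : ty) : ty :=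
  msubst (fun c => if Nat.eqb c a then u else TVar c) t.

Inductive value : Type :=
| VTrue : value
| VFalse : value
| VInt : Z -> value
| VFloat : R -> value
| VTup : list value -> value
| VFun : value
| VRec : list (nat * value) -> value
| VCon : nat -> value -> value.

(* inhabitation v |= tau, with sigma = empty: nothing inhabits t(...) *)
Inductive inhab : value -> ty -> Prop :=
| inh_true : inhab VTrue TBool
| inh_false : inhab VFalse TBool
| inh_int : forall n, inhab (VInt n) TInt
| inh_float : forall x, inhab (VFloat x) TFloat
| inh_fun : forall t1 t2, inhab VFun (TArrow t1 t2)
| inh_tup : forall vs ts, Forall2 inhab vs ts -> inhab (VTup vs) (TProd ts)
| inh_ex : forall v a k u, ground u -> inhab v (subst1 a u k) -> inhab v (TEx a k)
| inh_all : forall v a k,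
    (forall u, ground u -> inhab v (subst1 a u k)) -> inhab v (TAll a k)
| inh_with : forall v k t1 t2, t1 = t2 -> inhab v k -> inhab v (TWith k t1 t2).

Definition is_float (v : value) : Prop := exists x, v = VFloat x.

Definition separable (X : value -> Prop) : Prop :=
  (forall v, X v -> is_float v) \/ (forall v, X v -> ~ is_float v).

Inductive mode : Type := Ind | Sep | Deepsep.

Definition mode_rank (m : mode) : nat :=
  match m with Ind => 0 | Sep => 1 | Deepsep => 2 end.

Definition mode_min (m1 m2 : mode) : mode :=
  if Nat.leb (mode_rank m1) (mode_rank m2) then m1 else m2.

Inductive immsub : ty -> ty -> Prop :=
| is_con : forall c ts t, In t ts -> immsub t (TCon c ts)
| is_arr1 : forall t1 t2, immsub t1 (TArrow t1 t2)
| is_arr2 : forall t1 t2, immsub t2 (TArrow t1 t2)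
| is_prod : forall ts t, In t ts -> immsub t (TProd ts)
| is_all : forall a t, immsub t (TAll a t)
| is_ex : forall a t, immsub t (TEx a t)
| is_with0 : forall k k1 k2, immsub k (TWith k k1 k2)
| is_with1 : forall k k1 k2, immsub k1 (TWith k k1 k2)
| is_with2 : forall k k1 k2, immsub k2 (TWith k k1 k2).

Inductive subterm : ty -> ty -> Prop :=
| sub_refl : forall t, subterm t t
| sub_step : forall s t u, immsub s t -> subterm t u -> subterm s u.

Definition sem_sep (t : ty) : Prop := separable (fun v => inhab v t).

Definition sem_mode (t : ty) (m : mode) : Prop :=
  match m with
  | Ind => True
  | Sep => sem_sep t
  | Deepsep => forall s, subterm s t -> ground s -> sem_sep s
  end.

Inductive datatype : Type :=
| DSyn : ty -> datatype
| DVariant : list (nat * ty) -> datatype        (* boxed variant: constructors with argument *)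
| DUVariant : nat -> ty -> datatype             (* unboxed variant: one constructor *)
| DRecord : list (nat * ty) -> datatype         (* boxed record *)
| DURecord : nat -> ty -> datatype.             (* unboxed record: one field *)

Definition dsubst (g : nat -> ty) (A : datatype) : datatype :=
  match A with
  | DSyn t => DSyn (msubst g t)
  | DVariant cs => DVariant (map (fun p => (fst p, msubst g (snd p))) cs)
  | DUVariant c t => DUVariant c (msubst g t)
  | DRecord fs => DRecord (map (fun p => (fst p, msubst g (snd p))) fs)
  | DURecord l t => DURecord l (msubst g t)
  end.

Definition dinhab (v : value) (A : datatype) : Prop :=
  match A with
  | DSyn t => inhab v t
  | DVariant cs => exists c w t, v = VCon c w /\ In (c, t) cs /\ inhab w t
  | DUVariant _ t => inhab v t
  | DRecord fs => exists ws, v = VRec ws /\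
      Forall2 (fun p q => fst p = fst q /\ inhab (snd p) (snd q)) ws fs
  | DURecord _ t => inhab v t
  end.

Definition dt_scoped (params : list nat) (A : datatype) : Prop :=
  let ok t := forall a, occurs_free a t = true -> In a params in
  match A with
  | DSyn t | DUVariant _ t | DURecord _ t => ok t
  | DVariant cs | DRecord cs => forall p, In p cs -> ok (snd p)
  end.

Definition context := list (nat * mode).

Definition ground_valuation (g : nat -> ty) : Prop := forall a, ground (g a).

Definition satisfies (g : nat -> ty) (G : context) : Prop :=
  forall a m, In (a, m) G -> sem_mode (g a) m.

Definition sem_dt_judg (A : datatype) (G : context) : Prop :=
  forall g, ground_valuation g -> satisfies g G ->
    separable (fun v => dinhab v (dsubst g A)).

(* Take A := (alpha with alpha = beta). Its instances are inhabited only when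
   alpha and beta are instantiated by the same type, and then exactly by the
   values of alpha. So A is separable as soon as either parameter is, giving
   the contexts (alpha : Sep, beta : Ind) and (alpha : Ind, beta : Sep); their
   pointwise minimum (Ind, Ind) allows alpha = beta = (exists a. a), which is
   inhabited both by floats and by integers. *)
From Stdlib Require Import List Reals.
Import ListNotations.

Lemma separable_subset (X Y : value -> Prop) :
  (forall v, X v -> Y v) -> separable Y -> separable X.
Proof.
  intros HXY [HY | HY]; [left | right]; intros v Hv; apply HY, HXY, Hv.
Qed.

Lemma inhab_with_inv v k t1 t2 : inhab v (TWith k t1 t2) -> t1 = t2 /\ inhab v k.
Proof. intros H; inversion H; subst; auto. Qed.

Definition exists_ty : ty := TEx 0 (TVar 0).

Lemma ground_exists_ty : ground exists_ty.
Proof. intros a; simpl; destruct (Nat.eqb a 0); reflexivity. Qed.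

Lemma inhab_exists_ty v u : ground u -> inhab v u -> inhab v exists_ty.
Proof. intros Hu Hv; apply (inh_ex _ 0 (TVar 0) u Hu), Hv. Qed.

Lemma exists_ty_not_sep : ~ sem_sep exists_ty.
Proof.
  assert (Hint : inhab (VInt 0) exists_ty)
    by (apply (inhab_exists_ty _ TInt); [intros a; reflexivity | constructor]).
  assert (Hfloat : inhab (VFloat 0) exists_ty)
    by (apply (inhab_exists_ty _ TFloat); [intros a; reflexivity | constructor]).
  intros [H | H].
  - destruct (H _ Hint) as [x Hx]; discriminate.
  - apply (H _ Hfloat); exists 0%R; reflexivity.
Qed.

Section EqualityGuard.

Variables alpha beta : nat.

Definition guard_eq : datatype :=
  DSyn (TWith (TVar alpha) (TVar alpha) (TVar beta)).

Lemma guard_eq_scoped : dt_scoped [alpha; beta] guard_eq.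
Proof.
  intros a; simpl.
  destruct (Nat.eqb_spec a alpha), (Nat.eqb_spec a beta); simpl; auto; discriminate.
Qed.

Lemma guard_eq_sep_left (G : context) :
  In (alpha, Sep) G -> sem_dt_judg guard_eq G.
Proof.
  intros Hin g _ Hsat.
  apply (separable_subset _ _ (fun v Hv => proj2 (inhab_with_inv _ _ _ _ Hv))).
  exact (Hsat _ _ Hin).
Qed.

Lemma guard_eq_sep_right (G : context) :
  In (beta, Sep) G -> sem_dt_judg guard_eq G.
Proof.
  intros Hin g _ Hsat.
  apply (separable_subset _ (fun v => inhab v (g beta))).
  - intros v Hv; destruct (inhab_with_inv _ _ _ _ Hv) as [-> Hbeta]; exact Hbeta.
  - exact (Hsat _ _ Hin).
Qed.

Lemma guard_eq_not_ind (G : context) :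
  (forall a m, In (a, m) G -> m = Ind) -> ~ sem_dt_judg guard_eq G.
Proof.
  intros Hind Hjudg.
  assert (Hsat : satisfies (fun _ => exists_ty) G)
    by (intros a m Hin; rewrite (Hind a m Hin); exact I).
  apply exists_ty_not_sep.
  apply (separable_subset _ _ (fun v Hv => inh_with v exists_ty exists_ty exists_ty eq_refl Hv)).
  exact (Hjudg _ (fun _ => ground_exists_ty) Hsat).
Qed.

End EqualityGuard.

Theorem mainTheorem4 :
  exists (A : datatype) (alpha beta : nat) (m1a m1b m2a m2b : mode),
    alpha <> beta /\
    dt_scoped [alpha; beta] A /\
    sem_dt_judg A [(alpha, m1a); (beta, m1b)] /\
    sem_dt_judg A [(alpha, m2a); (beta, m2b)] /\
    ~ sem_dt_judg A [(alpha, mode_min m1a m2a); (beta, mode_min m1b m2b)].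
Proof.
  exists (guard_eq 0 1), 0, 1, Sep, Ind, Ind, Sep.
  repeat split.
  - discriminate.
  - apply guard_eq_scoped.
  - apply guard_eq_sep_left; simpl; auto.
  - apply guard_eq_sep_right; simpl; auto.
  - apply guard_eq_not_ind.
    intros a m [E | [E | []]]; inversion E; reflexivity.
Qed.
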